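(* Let $K\ge 1$, $N\ge1$, and for $k\in\{0,1,\dots,K\}$ let $\bm{H}_k\colon\mathbb{R}^{d_k}\to\mathbb{R}^{N\times E_k}$ be differentiable maps with bounded derivative, $\lVert\nabla\bm{H}_k(\bm{x}_k)\rVert\le H$ for all $\bm{x}_k$ and all $k$, and let $\Phi\colon\mathbb{R}^{N\times E}\to\mathbb{R}$, $E=\sum_kE_k$, be differentiable. Let $\mathcal{C}$ be a contractive compressor with parameter $\alpha\in(0,1]$. Let $\{\bm{x}^t\}$, $\{\bm{G}^t_k\}$ be generated by the EF-VFL algorithm with stepsize $\eta>0$ and batch size $B$ described in the context, and assume (unbiasedness) $\mathbb{E}[\tilde{\bm{g}}^t\mid\mathcal{F}_t]=\bm{g}^t$ and (bounded variance) $\mathbb{E}[\lVert\tilde{\bm{g}}^t-\bm{g}^t\rVert^2\mid\mathcal{F}_t]\le\sigma^2/B$ for all $t\in\{0,\dots,T-1\}$, for some $\sigma\ge0$. Then for all $t\ge0$ and all $\epsilon>0$, $$\mathbb{E}D^{(t+1)}\le(1-\alpha)(1+\epsilon)\,\mathbb{E}D^{(t)}+(1-\alpha)(1+\epsilon^{-1})\eta^2H^2\Big(\mathbb{E}\lVert\bm{g}^t\rVert^2+\frac{\sigma^2}{B}\Big).$$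
   Context: Norms of matrices are Frobenius norms, and the norm of the third-order tensor $\nabla\bm{H}_k(\bm{x}_k)$ is its Euclidean norm; $\nabla_k$ denotes the partial derivative with respect to the $k$-th block. A contractive compressor is a (possibly random) map $\mathcal{C}$ with $\mathbb{E}\lVert\mathcal{C}(\bm{v})-\bm{v}\rVert^2\le(1-\alpha)\lVert\bm{v}\rVert^2$ for all $\bm{v}$, with independent randomness at each application. EF-VFL: $\bm{G}^0_k=\mathcal{C}(\bm{H}_k(\bm{x}^0_k))$; for each $t$, $\bm{x}^{t+1}=\bm{x}^t-\eta\tilde{\bm{g}}^t$ and $\bm{G}^{t+1}_k=\bm{G}^t_k+\mathcal{C}(\bm{H}_k(\bm{x}^{t+1}_k)-\bm{G}^t_k)$, $k=0,\dots,K$. The surrogate gradient $\bm{g}^t=(\bm{g}^t_0,\dots,\bm{g}^t_K)$ has blocks $\bm{g}^t_k=\sum_{i=1}^N\sum_{j=1}^{E_k}[\nabla_k\Phi(\bm{G}^t_0,\dots,\bm{G}^t_{k-1},\bm{H}_k(\bm{x}^t_k),\bm{G}^t_{k+1},\dots,\bm{G}^t_K)]_{ij}[\nabla\bm{H}_k(\bm{x}^t_k)]_{ij:}$, and $\tilde{\bm{g}}^t$ is its mini-batch analogue on a sampled batch $\mathcal{B}^t\subseteq[N]$ of size $B$. $\mathcal{F}_t=\sigma(\bm{G}^0,\bm{x}^1,\bm{G}^1,\dots,\bm{x}^t,\bm{G}^t)$ with $\bm{G}^t=\{\bm{G}^t_0,\dots,\bm{G}^t_K\}$. $D^{(t)}=\sum_{k=0}^K\lVert\bm{G}^t_k-\bm{H}_k(\bm{x}^t_k)\rVert^2$.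 Expectations are over the randomness of $\mathcal{C}$ and of the batches. *)

From HB Require Import structures.
From mathcomp Require Import all_boot all_order all_algebra.
From mathcomp Require Import all_classical all_reals all_analysis.
Set Implicit Arguments. Unset Strict Implicit. Unset Printing Implicit Defensive.
Import Order.TTheory GRing.Theory Num.Theory.
Import numFieldNormedType.Exports.
Local Open Scope classical_set_scope.
Local Open Scope ring_scope.

Section Defs.
Variable R : realType.

Definition fro2 (m n : nat) (A : 'M[R]_(m, n)) : R :=
  \sum_(i < m) \sum_(j < n) A i j ^+ 2.

Definition bnorm2 (K : nat) (d : 'I_K.+1 -> nat) (v : forall k, 'M[R]_(1, d k)) : R :=
  \sum_(k < K.+1) fro2 (v k).

Definition evec (n : nat) (l : 'I_n) : 'rV[R]_n := delta_mx 0 l.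

(* Euclidean norm of the third-order tensor nabla H(x), with entries
   [nabla H(x)]_{i j l} = d H_{ij} / d x_l *)
Definition jac_norm (n m e : nat) (H : 'rV[R]_n -> 'M[R]_(m, e)) (x : 'rV[R]_n) : R :=
  Num.sqrt (\sum_(i < m) \sum_(j < e) \sum_(l < n) (('D_(evec l) H x) i j) ^+ 2).

Definition jac_row (n m e : nat) (H : 'rV[R]_n -> 'M[R]_(m, e)) (x : 'rV[R]_n)
  (i : 'I_m) (j : 'I_e) : 'rV[R]_n :=
  \row_(l < n) ('D_(evec l) H x) i j.

(* The direction in R^{N x E}, E = sum_k E_k, of the entry (i,j) of the k-th block. *)
Definition blk_dir (N K : nat) (E : 'I_K.+1 -> nat) (k : 'I_K.+1) (i : 'I_N) (j : 'I_(E k))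
  : 'M[R]_(N, \sum_(k' < K.+1) E k') :=
  \mxrow_(k' < K.+1)
     (\matrix_(i' < N, j' < E k')
        ((k' == k) && (i' == i) && (nat_of_ord j' == nat_of_ord j))%:R).

Definition blk_grad (N K : nat) (E : 'I_K.+1 -> nat)
  (Phi : 'M[R]_(N, \sum_(k' < K.+1) E k') -> R) (Z : 'M[R]_(N, \sum_(k' < K.+1) E k'))
  (k : 'I_K.+1) : 'M[R]_(N, E k) :=
  \matrix_(i < N, j < E k) 'D_(@blk_dir N K E k i j) Phi Z.

Definition blk_point (N K : nat) (d E : 'I_K.+1 -> nat)
  (Hf : forall k, 'rV[R]_(d k) -> 'M[R]_(N, E k))
  (x : forall k, 'rV[R]_(d k)) (G : forall k, 'M[R]_(N, E k)) (k : 'I_K.+1)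
  : 'M[R]_(N, \sum_(k' < K.+1) E k') :=
  \mxrow_(k' < K.+1) (if k' == k then Hf k' (x k') else G k').

Definition surr_grad (N K : nat) (d E : 'I_K.+1 -> nat)
  (Hf : forall k, 'rV[R]_(d k) -> 'M[R]_(N, E k))
  (Phi : 'M[R]_(N, \sum_(k' < K.+1) E k') -> R)
  (x : forall k, 'rV[R]_(d k)) (G : forall k, 'M[R]_(N, E k)) (k : 'I_K.+1)
  : 'rV[R]_(d k) :=
  \sum_(i < N) \sum_(j < E k)
     (blk_grad Phi (blk_point Hf x G k) k i j) *: jac_row (Hf k) (x k) i j.

Definition Dgap (N K : nat) (d E : 'I_K.+1 -> nat)
  (Hf : forall k, 'rV[R]_(d k) -> 'M[R]_(N, E k))
  (x : forall k, 'rV[R]_(d k)) (G : forall k, 'M[R]_(N, E k)) : R :=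
  \sum_(k < K.+1) fro2 (G k - Hf k (x k)).

End Defs.

Section Prob.
Context {R : realType} {dO : measure_display} {Omega : measurableType dO}.

Definition gen_by (fs : set (Omega -> R)) : set (set Omega) :=
  <<s [set A | exists f, fs f /\ exists B : set R, measurable B /\ A = f @^-1` B] >>.

Definition Fmeas (F : set (set Omega)) (f : Omega -> R) : Prop :=
  forall B : set R, measurable B -> F (f @^-1` B).

(* E[X | F] = Y  (defining property of conditional expectation; X integrable,
   Y an F-measurable integrable version) *)
Definition cexp_eq (P : probability Omega R) (F : set (set Omega)) (X Y : Omega -> R) : Prop :=
  [/\ P.-integrable setT (fun w => (X w)%:E), P.-integrable setT (fun w => (Y w)%:E),
      Fmeas F Y &
      forall A, F A -> (\int[P]_(w in A) (X w)%:E = \int[P]_(w in A) (Y w)%:E)%E].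

(* E[X | F] <= Y for nonnegative X and F-measurable Y >= 0 *)
Definition cexp_le (P : probability Omega R) (F : set (set Omega)) (X Y : Omega -> R) : Prop :=
  Fmeas F Y /\
  forall A, F A -> (\int[P]_(w in A) (X w)%:E <= \int[P]_(w in A) (Y w)%:E)%E.

Definition Ex (P : probability Omega R) (X : Omega -> R) : \bar R :=
  (\int[P]_w (X w)%:E)%E.

End Prob.

(* Error feedback turns one step of EF-VFL into a contraction of the compression error:
   G^{t+1}_k - H_k(x^{t+1}_k) = C(v_k) - v_k with v_k = H_k(x^{t+1}_k) - G^t_k, so that
   E D^{t+1} <= (1 - alpha) sum_k E ||v_k||^2.  Young's inequality splits ||v_k||^2 into
   (1 + eps) ||G^t_k - H_k(x^t_k)||^2 and (1 + 1/eps) ||H_k(x^{t+1}_k) - H_k(x^t_k)||^2, and the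
   mean value inequality bounds the latter by H^2 eta^2 ||g~^t_k||^2.  Finally
   E ||g~^t||^2 <= E ||g^t||^2 + sigma^2 / B because the cross term E <g^t, g~^t - g^t> vanishes:
   g^t is F_t-measurable and g~^t - g^t has zero integral over every set of F_t.  Since g^t need
   not be square integrable, this is done on the F_t-sets where g^t is bounded, approximating
   g^t there by F_t-step functions, and the bound is extended to the whole space by monotone
   convergence. *)

From HB Require Import structures.
From mathcomp Require Import all_boot all_order all_algebra.
From mathcomp Require Import all_classical all_reals all_analysis.
From mathcomp Require Import measurable_realfun.
From mathcomp Require Import ring lra.
Set Implicit Arguments. Unset Strict Implicit. Unset Printing Implicit Defensive.
Import Order.TTheory GRing.Theory Num.Theory.
Import numFieldNormedType.Exports.
Local Open Scope classical_set_scope.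
Local Open Scope ring_scope.

Section frobenius.
Context {R : realType}.

Lemma fro2_ge0 m n (A : 'M[R]_(m, n)) : 0 <= fro2 A.
Proof. by apply: sumr_ge0 => i _; apply: sumr_ge0 => j _; exact: sqr_ge0. Qed.

Lemma fro2N m n (A : 'M[R]_(m, n)) : fro2 (- A) = fro2 A.
Proof. by apply: eq_bigr => i _; apply: eq_bigr => j _; rewrite mxE sqrrN. Qed.

Lemma fro2Z m n (c : R) (A : 'M[R]_(m, n)) : fro2 (c *: A) = c ^+ 2 * fro2 A.
Proof.
rewrite /fro2 mulr_sumr; apply: eq_bigr => i _; rewrite mulr_sumr.
by apply: eq_bigr => j _; rewrite mxE exprMn.
Qed.

Lemma fro2_subC m n (A B : 'M[R]_(m, n)) : fro2 (A - B) = fro2 (B - A).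
Proof. by rewrite -fro2N opprB. Qed.

Lemma bnorm2_sig K (d : 'I_K.+1 -> nat) (v : forall k, 'rV[R]_(d k)) :
  bnorm2 v = \sum_(p : {k : 'I_K.+1 & 'I_(d k)}) v (tag p) 0 (tagged p) ^+ 2.
Proof.
rewrite /bnorm2 /fro2; under eq_bigr do rewrite big_ord1.
exact: (@sig_big_dep _ 0 +%R 'I_K.+1 (fun k => 'I_(d k)) predT (fun _ => predT)
  (fun k (l : 'I_(d k)) => v k 0 l ^+ 2)).
Qed.

Lemma sqrrD_le_weighted (a b eps : R) : 0 < eps ->
  (a + b) ^+ 2 <= (1 + eps) * b ^+ 2 + (1 + eps^-1) * a ^+ 2.
Proof.
move=> eps_gt0; rewrite -subr_ge0.
have -> : (1 + eps) * b ^+ 2 + (1 + eps^-1) * a ^+ 2 - (a + b) ^+ 2 =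
          (eps * b - a) ^+ 2 / eps by field; rewrite gt_eqF.
by rewrite divr_ge0 ?sqr_ge0 ?ltW.
Qed.

Lemma fro2D_le_weighted m n (A B : 'M[R]_(m, n)) eps : 0 < eps ->
  fro2 (A + B) <= (1 + eps) * fro2 B + (1 + eps^-1) * fro2 A.
Proof.
move=> eps_gt0; rewrite /fro2 !mulr_sumr -big_split /=; apply: ler_sum => i _.
rewrite !mulr_sumr -big_split /=; apply: ler_sum => j _.
by rewrite mxE; exact: sqrrD_le_weighted.
Qed.

Lemma cauchy_schwarz_sum (I : finType) (a b : I -> R) :
  (\sum_i a i * b i) ^+ 2 <= (\sum_i a i ^+ 2) * (\sum_i b i ^+ 2).
Proof.
set A := \sum_i a i ^+ 2; set B := \sum_i b i ^+ 2; set C := \sum_i a i * b i.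
have A_ge0 : 0 <= A by apply: sumr_ge0 => i _; exact: sqr_ge0.
have [A0|A_neq0] := eqVneq A 0.
  have a0 i : a i = 0.
    apply/eqP; rewrite -sqrf_eq0; apply/eqP.
    by apply: (psumr_eq0P (P := predT) (fun i _ => sqr_ge0 (a i)) A0).
  by rewrite A0 mul0r /C big1 ?expr0n // => i _; rewrite a0 mul0r.
(* the quadratic [t |-> \sum_i (a i * t - b i) ^+ 2] is nonnegative at its minimiser [C / A] *)
have : 0 <= \sum_i (a i * (C / A) - b i) ^+ 2 by apply: sumr_ge0 => i _; exact: sqr_ge0.
have -> : \sum_i (a i * (C / A) - b i) ^+ 2 = (A * B - C ^+ 2) / A.
  have expand t : \sum_i (a i * t - b i) ^+ 2 = t ^+ 2 * A - 2 * t * C + B.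
    by rewrite /A /B /C !mulr_sumr -sumrB -big_split /=; apply: eq_bigr => i _; ring.
  by rewrite expand; field.
by rewrite pmulr_lge0 ?subr_ge0 // invr_gt0 lt_def A_neq0.
Qed.

End frobenius.

Section mean_value_inequality.
Context {R : realType} {n m e : nat} (H : 'rV[R]_n -> 'M[R]_(m, e)).

Lemma is_derive_pairing (U : 'M[R]_(m, e)) (x h : 'rV[R]_n) (s : R) :
  differentiable H (x + s *: h) ->
  is_derive s 1 (fun s => \sum_i \sum_j U i j * H (x + s *: h) i j)
    (\sum_i \sum_j U i j * ('D_h H (x + s *: h)) i j).
Proof.
move=> dH; set p := x + s *: h; set psi := (fun s => _).
have quotE : (fun t : R => t^-1 *: ((psi \o shift s) (t *: 1) - psi s)) =
    fun t => \sum_i \sum_j U i j * (t^-1 *: ((H \o shift p) (t *: h) - H p)) i j.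
  apply: funext => t; rewrite /psi /=.
  have -> : x + (t *: 1 + s) *: h = t *: h + p by rewrite scalerDl [t *: 1]mulr1 addrCA.
  rewrite -sumrB /GRing.scale /= mulr_sumr; apply: eq_bigr => i _.
  rewrite -sumrB mulr_sumr; apply: eq_bigr => j _.
  by rewrite !mxE; ring.
have quot_cvg : (fun t => \sum_i \sum_j U i j * (t^-1 *: ((H \o shift p) (t *: h) - H p)) i j)
     @ 0^' --> \sum_i \sum_j U i j * ('D_h H p) i j.
  apply: cvg_big => [|i _]; first exact: add_continuous.
  apply: cvg_big => [|j _]; first exact: add_continuous.
  apply: cvgM; first exact: cvg_cst.
  have diff_quot : (fun t : R => t^-1 *: ((H \o shift p) (t *: h) - H p)) @ 0^' --> 'D_h H p.
    exact: diff_derivable.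
  exact: (cvg_comp _ _ diff_quot (@coord_continuous R m e i j _)).
apply: DeriveDef.
  by rewrite /derivable quotE; exact: cvgP quot_cvg.
by rewrite /derive quotE; exact: cvg_lim quot_cvg.
Qed.

Lemma deriveE_coord (p h : 'rV[R]_n) i j : differentiable H p ->
  ('D_h H p) i j = \sum_l h 0 l * ('D_(@evec R n l) H p) i j.
Proof.
move=> dH; rewrite deriveE //.
have -> : 'd H p h = 'd H p (\sum_l h 0 l *: delta_mx 0 l) by rewrite -row_sum_delta.
rewrite linear_sum summxE; apply: eq_bigr => l _.
by rewrite linearZ mxE deriveE.
Qed.

Lemma fro2_derive_le (p h : 'rV[R]_n) : differentiable H p ->
  \sum_i \sum_j ('D_h H p) i j ^+ 2 <= jac_norm H p ^+ 2 * fro2 h.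
Proof.
move=> dH; rewrite sqr_sqrtr; last first.
  by do 3 (apply: sumr_ge0 => ? _); exact: sqr_ge0.
rewrite mulr_suml; apply: ler_sum => i _; rewrite mulr_suml; apply: ler_sum => j _.
rewrite deriveE_coord // mulrC /fro2 big_ord1; exact: cauchy_schwarz_sum.
Qed.

Lemma fro2_lipschitz (L : R) : (forall x, differentiable H x) -> (forall x, jac_norm H x <= L) ->
  forall x y, fro2 (H y - H x) <= L ^+ 2 * fro2 (y - x).
Proof.
move=> dH HL x y; set U := H y - H x; set h := y - x.
pose psi s := \sum_i \sum_j U i j * H (x + s *: h) i j.
pose dpsi s := \sum_i \sum_j U i j * ('D_h H (x + s *: h)) i j.
have psi_derive (s : R) : is_derive s (1 : R) psi (dpsi s) by exact: is_derive_pairing (dH _).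
have [c _ MVTc] : exists2 c, c \in `]0, 1[ & psi 1 - psi 0 = dpsi c * (1 - 0).
  apply: (MVT ltr01 (fun s _ => psi_derive s)).
  by apply: derivable_within_continuous => s _; exact: (@ex_derive _ _ _ _ _ _ _ (psi_derive s)).
have psi10 : psi 1 - psi 0 = fro2 U.
  rewrite /psi scale1r scale0r addr0.
  have -> : x + h = y by rewrite /h addrC subrK.
  rewrite -sumrB; apply: eq_bigr => i _.
  by rewrite -sumrB; apply: eq_bigr => j _; rewrite /U !mxE; ring.
rewrite psi10 subr0 mulr1 in MVTc.
set p := x + c *: h in MVTc.
have dpsi_le : dpsi c ^+ 2 <= fro2 U * (L ^+ 2 * fro2 h).
  have cs : dpsi c ^+ 2 <= fro2 U * \sum_i \sum_j ('D_h H p) i j ^+ 2.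
    by rewrite /dpsi -/p /fro2 !pair_big /=; apply: cauchy_schwarz_sum.
  have jac_le : jac_norm H p ^+ 2 <= L ^+ 2.
    by rewrite ler_sqr ?nnegrE ?sqrtr_ge0 ?(le_trans (sqrtr_ge0 _) (HL p)).
  apply: (le_trans cs); rewrite ler_wpM2l ?fro2_ge0 //.
  apply: le_trans (fro2_derive_le h (dH p)) _.
  by rewrite ler_wpM2r ?fro2_ge0.
rewrite -MVTc in dpsi_le.
have [U0|U_neq0] := eqVneq (fro2 U) 0.
  by rewrite U0 mulr_ge0 ?sqr_ge0 ?fro2_ge0.
have U_gt0 : 0 < fro2 U by rewrite lt_def U_neq0 fro2_ge0.
by rewrite -(ler_pM2l U_gt0) -expr2.
Qed.

Lemma fro2_step_le (L eta eps : R) (x g : 'rV[R]_n) (G : 'M[R]_(m, e)) :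
  (forall x, differentiable H x) -> (forall x, jac_norm H x <= L) -> 0 < eps ->
  fro2 (H (x - eta *: g) - G) <=
    (1 + eps) * fro2 (G - H x) + (1 + eps^-1) * (eta ^+ 2 * L ^+ 2 * fro2 g).
Proof.
move=> H_diff H_jac eps_gt0.
have -> : H (x - eta *: g) - G = (H (x - eta *: g) - H x) + (H x - G) by rewrite addrA subrK.
apply: le_trans (fro2D_le_weighted _ _ eps_gt0) _.
rewrite fro2_subC lerD2l; apply: ler_wpM2l; first by rewrite addr_ge0 // invr_ge0 ltW.
have := fro2_lipschitz H_diff H_jac x (x - eta *: g).
by rewrite addrAC subrr add0r fro2N fro2Z [L ^+ 2 * _]mulrCA mulrA.
Qed.

End mean_value_inequality.

Section measurable_rV.
Context {R : realType} {dO : measure_display} {Omega : measurableType dO} {n : nat}.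
Variable phi : Omega -> 'rV[R]_n.
Hypothesis measurable_coord : forall l, measurable_fun setT (fun w => phi w 0 l).

Definition rat_box (q : {ffun 'I_n -> rat} * {ffun 'I_n -> rat}) : set 'rV[R]_n :=
  [set z | forall l, ratr (q.1 l) < z 0 l < ratr (q.2 l)].

Lemma open_rat_box_cover (V : set 'rV[R]_n) z :
  open V -> V z -> exists2 q, rat_box q `<=` V & rat_box q z.
Proof.
move=> /[apply] /nbhs_ballP [r r_gt0 ballV].
have [a a_in] : exists a : 'I_n -> rat, forall l, ratr (a l) \in `](z 0 l - r), z 0 l[.
  apply: (fin_all_exists (P := fun l (q : rat) => ratr q \in `](z 0 l - r), z 0 l[)) => l.
  by apply: rat_in_itvoo; rewrite ltrBlDr ltrDl.
have [b b_in] : exists b : 'I_n -> rat, forall l, ratr (b l) \in `](z 0 l), z 0 l + r[.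
  apply: (fin_all_exists (P := fun l (q : rat) => ratr q \in `](z 0 l), z 0 l + r[)) => l.
  by apply: rat_in_itvoo; rewrite ltrDl.
exists ([ffun l => a l], [ffun l => b l]); last first.
  move=> l /=; rewrite !ffunE; move: (a_in l) (b_in l).
  by rewrite !in_itv /= => /andP[_ ->] /andP[-> _].
move=> y /= y_in; apply: ballV; split=> // i l; rewrite (ord1 i) -ball_normE /ball_ /=.
move: (y_in l) (a_in l) (b_in l); rewrite !ffunE !in_itv /=.
move=> /andP[? ?] /andP[? ?] /andP[? ?]; rewrite ltr_norml; apply/andP; split; lra.
Qed.

Lemma measurable_preimage_rat_box q : measurable (phi @^-1` rat_box q).
Proof.
have -> : phi @^-1` rat_box q =
    \bigcap_l ((fun w => phi w 0 l) @^-1` `](ratr (q.1 l)), (ratr (q.2 l))[).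
  apply/seteqP; split=> w /= wq l; first by move=> _; rewrite /= in_itv; exact: wq.
  by move: (wq l I); rewrite /= in_itv.
apply: fin_bigcap_measurable finite_finset _ => l _.
by rewrite -[X in measurable X]setTI; apply: measurable_coord => //; exact: measurable_itv.
Qed.

Lemma measurable_preimage_open (V : set 'rV[R]_n) : open V -> measurable (phi @^-1` V).
Proof.
move=> oV.
have -> : phi @^-1` V =
    \bigcup_q (if pselect (rat_box q `<=` V) then phi @^-1` rat_box q else set0).
  apply/seteqP; split=> [w /= Vw|w [q _ /=]].
    by have [q qV qw] := open_rat_box_cover oV Vw; exists q => //; case: pselect.
  by case: pselect => // qV /qV.
apply: countable_bigcupT_measurable; first exact: countableP.
by move=> q; case: pselect => ?; [exact: measurable_preimage_rat_box | exact: measurable0].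
Qed.

Lemma measurable_comp_continuous (f : 'rV[R]_n -> R) :
  continuous f -> measurable_fun setT (f \o phi).
Proof.
move=> /continuousP f_cont.
apply: (measurability _ (measurable_realfun.RGenOpens.measurableE R)).
move=> _ [_ [a [b ->]] <-]; rewrite setTI comp_preimage.
exact/measurable_preimage_open/f_cont/interval_open.
Qed.

End measurable_rV.

Section measurable_matrix.
Context {R : realType} {dO : measure_display} {Omega : measurableType dO}.

Lemma measurable_entry_comp n m e (H : 'rV[R]_n -> 'M[R]_(m, e)) (phi : Omega -> 'rV[R]_n) i j :
  continuous H -> (forall l, measurable_fun setT (fun w => phi w 0 l)) ->
  measurable_fun setT (fun w => H (phi w) i j).
Proof.
move=> H_cont phi_meas.
have entry_cont : continuous (fun v => H v i j).
  by move=> v; exact: continuous_comp (H_cont v) (@coord_continuous R m e i j (H v)).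
exact: (measurable_comp_continuous phi_meas entry_cont).
Qed.

Lemma measurable_entryB m n (A B : Omega -> 'M[R]_(m, n)) i j :
  measurable_fun setT (fun w => A w i j) -> measurable_fun setT (fun w => B w i j) ->
  measurable_fun setT (fun w => (A w - B w) i j).
Proof.
move=> mA mB; under eq_fun do rewrite !mxE; exact: measurable_funB.
Qed.

Lemma measurable_fro2 m n (A : Omega -> 'M[R]_(m, n)) :
  (forall i j, measurable_fun setT (fun w => A w i j)) -> measurable_fun setT (fun w => fro2 (A w)).
Proof.
move=> mA; apply: measurable_sum => i; apply: measurable_sum => j; exact: measurable_funX.
Qed.

End measurable_matrix.

Lemma mem_grid_cell {R : realType} (M delta z : R) (i : nat) : 0 < delta -> - M <= z ->
  (- M + i%:R * delta <= z < - M + i%:R * delta + delta) = (Num.truncn ((z + M) / delta) == i).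
Proof.
move=> delta_gt0 zM; rewrite truncn_eq ?divr_ge0 ?(ltW delta_gt0) ?subr_ge0 //; last lra.
rewrite ler_pdivlMr // ltr_pdivrMr // -natr1 mulrDl mul1r.
by congr andb; apply/idP/idP; lra.
Qed.

Lemma normr_indicM_le {T : Type} {R : realType} (A : set T) (f : T -> R) (M : R) :
  (forall w, A w -> `|f w| <= M) -> forall w, `|\1_A w * f w| <= `|M|.
Proof.
move=> fM w; rewrite indicE; case: (pselect (A w)) => [Aw|nAw].
  by rewrite mem_set // mul1r (le_trans (fM w Aw) (ler_norm M)).
by rewrite memNset // mul0r normr0.
Qed.

Section integration.
Context {R : realType} {dO : measure_display} {Omega : measurableType dO} (P : probability Omega R).

Lemma integral_setE_indic (A : set Omega) (f : Omega -> R) :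
  (\int[P]_(w in A) (f w)%:E = \int[P]_w (\1_A w * f w)%:E)%E.
Proof.
rewrite integral_mkcond; apply: eq_integral => w _.
by rewrite /restrict /patch indicE; case: (w \in A); rewrite ?mul1r ?mul0r.
Qed.

Lemma integrable_bounded_mul (h f : Omega -> R) (M : R) :
  measurable_fun setT h -> (forall w, `|h w| <= M) ->
  P.-integrable setT (EFin \o f) -> P.-integrable setT (EFin \o (fun w => h w * f w)).
Proof.
move=> mh hM f_int.
have h_bounded : [bounded h w | w in setT].
  exists M; split; first exact: num_real.
  by move=> N MN w _ /=; exact: le_trans (hM w) (ltW MN).
have := integrableMr measurableT mh h_bounded f_int.
by congr (P.-integrable _ _); apply/funext => w /=; rewrite EFinM.
Qed.

Lemma integrable_bounded (h : Omega -> R) (M : R) :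
  measurable_fun setT h -> (forall w, `|h w| <= M) -> P.-integrable setT (EFin \o h).
Proof.
move=> mh hM.
have := integrable_bounded_mul mh hM (finite_measure_integrable_cst P 1 measurableT).
by congr (P.-integrable _ _); apply/funext => w /=; rewrite mulr1.
Qed.

Lemma Rintegral_mul_approx (g h D : Omega -> R) (M delta : R) :
  measurable_fun setT g -> measurable_fun setT h ->
  (forall w, `|g w| <= M) -> (forall w, `|g w - h w| <= delta) ->
  P.-integrable setT (EFin \o D) -> (\int[P]_w (h w * D w)%:E = 0)%E ->
  `|Rintegral P setT (fun w => g w * D w)| <= delta * Rintegral P setT (fun w => `|D w|).
Proof.
move=> mg mh gM ghd D_int hD0.
have hM w : `|h w| <= M + delta.
  have -> : h w = g w - (g w - h w) by ring.
  exact: le_trans (ler_normB _ _) (lerD (gM w) (ghd w)).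
have ghD_int := integrable_bounded_mul (measurable_funB mg mh) ghd D_int.
have hD_int := integrable_bounded_mul mh hM D_int.
have -> : Rintegral P setT (fun w => g w * D w) = Rintegral P setT (fun w => (g w - h w) * D w).
  rewrite -[RHS]addr0 -[X in _ + X]/(fine 0%E) -hD0 -RintegralD //.
  by apply: eq_Rintegral => w _; ring.
apply: le_trans (le_normr_Rintegral measurableT ghD_int) _.
have absD_int : P.-integrable setT (EFin \o (fun w => delta * `|D w|)).
  apply: (integrable_bounded_mul (h := fun=> delta) (f := Num.norm \o D) (M := delta))
    (integrable_norm D_int) => //.
  by move=> w; rewrite ger0_norm // (le_trans (normr_ge0 _) (ghd w)).
rewrite -RintegralZl //; last exact: integrable_norm D_int.
apply: le_Rintegral => //; first exact: integrable_norm ghD_int.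
by move=> w _ /=; rewrite normrM ler_wpM2r.
Qed.

Lemma ge0_integral_le_nd_cover (A : nat -> set Omega) (f : Omega -> R) (c : \bar R) :
  (forall n, measurable (A n)) -> nondecreasing_seq A -> \bigcup_n A n = setT ->
  measurable_fun setT f -> (forall w, 0 <= f w) ->
  (forall n, \int[P]_(w in A n) (f w)%:E <= c)%E -> (\int[P]_w (f w)%:E <= c)%E.
Proof.
move=> mA ndA AT mf f_ge0 Af.
have mfE n : measurable_fun (A n) (EFin \o f).
  exact/measurable_EFinP/(measurable_funS measurableT (@subsetT _ _) mf).
have fE_ge0 n w : A n w -> (0 <= (EFin \o f) w)%E by rewrite /= lee_fin.
have := ge0_nondecreasing_set_cvg_integral (mu := P) ndA mA mfE fE_ge0.
rewrite AT => cvgA; rewrite -(cvg_lim _ cvgA) //.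
by apply: lime_le; [exact: cvgP cvgA | exact: nearW].
Qed.

Lemma le_Ex (f g : Omega -> R) : measurable_fun setT f -> measurable_fun setT g ->
  (forall w, 0 <= f w) -> (forall w, f w <= g w) -> (Ex P f <= Ex P g)%E.
Proof.
move=> mf mg f_ge0 fg; apply: ge0_le_integral => //.
- by move=> w _; rewrite lee_fin.
- exact/measurable_EFinP.
- exact/measurable_EFinP.
- by move=> w _; rewrite lee_fin.
Qed.

Lemma Ex_sum n (f : 'I_n -> Omega -> R) :
  (forall k, measurable_fun setT (f k)) -> (forall k w, 0 <= f k w) ->
  Ex P (fun w => \sum_k f k w) = (\sum_k Ex P (f k))%E.
Proof.
move=> mf f_ge0; rewrite /Ex; under eq_integral do rewrite -sumEFin.
rewrite ge0_integral_sum // => k; first exact/measurable_EFinP.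
by move=> w _; rewrite lee_fin.
Qed.

Lemma Ex_add_scale (a c : R) (f g : Omega -> R) : 0 <= a -> 0 <= c ->
  measurable_fun setT f -> measurable_fun setT g -> (forall w, 0 <= f w) -> (forall w, 0 <= g w) ->
  Ex P (fun w => a * f w + c * g w) = (a%:E * Ex P f + c%:E * Ex P g)%E.
Proof.
move=> a_ge0 c_ge0 mf mg f_ge0 g_ge0; rewrite /Ex.
under eq_integral do rewrite EFinD 2!EFinM.
rewrite ge0_integralD //; last 4 first.
- by move=> w _; rewrite mule_ge0 ?lee_fin.
- by apply: measurable_funeM; exact/measurable_EFinP.
- by move=> w _; rewrite mule_ge0 ?lee_fin.
- by apply: measurable_funeM; exact/measurable_EFinP.
rewrite !ge0_integralZl //; try (by move=> w _; rewrite lee_fin); exact/measurable_EFinP.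
Qed.

End integration.

Section preimage_sets.
Context {R : realType} {dO : measure_display} {Omega : measurableType dO}.

(* [gen_by fs] is by definition [<<s preimage_sets fs>>]. *)
Definition preimage_sets (fs : set (Omega -> R)) : set (set Omega) :=
  [set A | exists f, fs f /\ exists B : set R, measurable B /\ A = f @^-1` B].

Lemma preimage_sets_measurable (fs : set (Omega -> R)) :
  (forall f, fs f -> measurable_fun setT f) -> preimage_sets fs `<=` measurable.
Proof. by move=> fs_meas _ [f [fsf [B [mB ->]]]]; rewrite -(setTI (f @^-1` B)); exact: fs_meas. Qed.

End preimage_sets.

Section conditioning.
Context {R : realType} {dO : measure_display} {Omega : measurableType dO} (P : probability Omega R).
Variable G0 : set (set Omega).
Hypothesis G0_measurable : G0 `<=` measurable.
Local Notation F := (<<s G0>>).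

Lemma sub_sigma_measurable : F `<=` measurable.
Proof. by apply: smallest_sub => //; exact: sigma_algebra_measurable. Qed.

Lemma Fmeas_measurable_fun (Z : Omega -> R) : Fmeas F Z -> measurable_fun setT Z.
Proof. by move=> FZ _ B mB; rewrite setTI; apply: sub_sigma_measurable; exact: FZ. Qed.

Lemma cexp_le_Ex (X Y : Omega -> R) : cexp_le P F X Y -> (Ex P X <= Ex P Y)%E.
Proof. by case=> _ XY; apply: XY; exact: (@measurableT _ (g_sigma_algebraType G0)). Qed.

Lemma integral_step_mul_eq0 L (c : 'I_L -> R) (S : 'I_L -> set Omega) (D : Omega -> R) :
  (forall i, F (S i)) -> P.-integrable setT (EFin \o D) ->
  (forall B, F B -> \int[P]_(w in B) (D w)%:E = 0)%E ->
  (\int[P]_w ((\sum_i c i * \1_(S i) w) * D w)%:E = 0)%E.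
Proof.
move=> FS D_int D0.
have SD_int i : P.-integrable setT (EFin \o (fun w => \1_(S i) w * D w)).
  apply: (integrable_bounded_mul (M := 1)) D_int; first exact/measurable_indic/sub_sigma_measurable.
  by move=> w; rewrite indicE; case: (_ \in _); rewrite ?normr1 ?normr0.
have sumE w : ((\sum_i c i * \1_(S i) w) * D w)%:E = (\sum_i (c i)%:E * (\1_(S i) w * D w)%:E)%E.
  by rewrite mulr_suml -sumEFin; apply: eq_bigr => i _; rewrite -mulrA EFinM.
under eq_integral do rewrite sumE.
rewrite integral_sum //; last by move=> i; apply: integrableZl => //; exact: SD_int.
apply: big1 => i _; rewrite integralZl //; last exact: SD_int.
by rewrite -integral_setE_indic D0 ?mule0.
Qed.

Lemma grid_step_approx (Z : Omega -> R) (A : set Omega) (M delta : R) :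
  Fmeas F Z -> F A -> 0 < delta -> (forall w, A w -> `|Z w| <= M) ->
  exists L (c : 'I_L -> R) (S : 'I_L -> set Omega), (forall i, F (S i)) /\
    forall w, `|\1_A w * Z w - \sum_i c i * \1_(S i) w| <= delta.
Proof.
move=> FZ FA delta_gt0 ZM.
pose k w := Num.truncn ((Z w + M) / delta).
pose L := (Num.truncn ((M + M) / delta)).+1.
pose c (i : 'I_L) := - M + i%:R * delta.
pose S (i : 'I_L) := A `&` Z @^-1` `[c i, c i + delta[.
exists L, c, S; split=> [i|w].
  by apply: (@measurableI _ (g_sigma_algebraType G0)) => //; apply: FZ; exact: measurable_itv.
have [Aw|nAw] := pselect (A w); last first.
  rewrite indicE memNset // mul0r big1 ?subr0 ?normr0 ?ltW // => i _.
  by rewrite indicE memNset ?mulr0 // => -[].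
have [ZwM MZw] : - M <= Z w /\ Z w <= M by move: (ZM w Aw); rewrite ler_norml => /andP[].
have k_lt : (k w < L)%N.
  by rewrite ltnS; apply: le_truncn; apply: ler_wpM2r; [rewrite invr_ge0 ltW | lra].
have S_k i : (w \in S i) = (i == Ordinal k_lt).
  have -> : (w \in S i) = (c i <= Z w < c i + delta).
    apply/idP/idP => [/set_mem [_ /=]|wS]; first by rewrite in_itv.
    by apply/mem_set; split=> //=; rewrite in_itv.
  by rewrite /c mem_grid_cell // -val_eqE /= eq_sym.
rewrite indicE mem_set // mul1r (bigD1 (Ordinal k_lt)) //= big1 => [|i /negbTE ik]; last first.
  by rewrite indicE S_k ik mulr0.
rewrite indicE S_k eqxx mulr1 addr0.
have := mem_grid_cell (k w) delta_gt0 ZwM; rewrite eqxx => /andP[? ?].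
rewrite ler_norml; apply/andP; split; rewrite /c; lra.
Qed.

Lemma integral_Fmeas_mul_eq0 (Z D : Omega -> R) (A : set Omega) (M : R) :
  Fmeas F Z -> P.-integrable setT (EFin \o D) ->
  (forall B, F B -> \int[P]_(w in B) (D w)%:E = 0)%E ->
  F A -> (forall w, A w -> `|Z w| <= M) ->
  (\int[P]_(w in A) (Z w * D w)%:E = 0)%E.
Proof.
move=> FZ D_int D0 FA ZM.
pose g w := \1_A w * Z w.
have mg : measurable_fun setT g.
  apply: measurable_funM; first exact/measurable_indic/sub_sigma_measurable.
  exact: Fmeas_measurable_fun FZ.
have gM w : `|g w| <= `|M| by exact: normr_indicM_le.
rewrite integral_setE_indic; under eq_integral do rewrite mulrA -/(g _).
rewrite -[LHS]fineK; last first.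
  exact: integrable_fin_num (integrable_bounded_mul mg gM D_int).
congr EFin; apply/eqP; rewrite -normr_le0; apply/ler_addgt0Pr => eps eps_gt0.
set K := Rintegral P setT (fun w => `|D w|).
have K_ge0 : 0 <= K by apply: Rintegral_ge0.
have delta_gt0 : 0 < eps / (K + 1) by rewrite divr_gt0 // ltr_wpDl.
(* an F-step function within [eps / (K + 1)] of [g] integrates to 0 against [D] *)
have [L [c [S [FS gh]]]] := grid_step_approx FZ FA delta_gt0 ZM.
have mh : measurable_fun setT (fun w => \sum_i c i * \1_(S i) w).
  apply: measurable_sum => i; apply: measurable_funM; first exact: measurable_cst.
  exact/measurable_indic/sub_sigma_measurable.
apply: le_trans (Rintegral_mul_approx mg mh gM gh D_int (integral_step_mul_eq0 c FS D_int D0)) _.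
by rewrite add0r -/K mulrAC ler_pdivrMr ?ltr_wpDl // ler_pM2l // lerDl.
Qed.

Lemma cexp_eq_centered (X Y : Omega -> R) : cexp_eq P F X Y ->
  P.-integrable setT (EFin \o (fun w => X w - Y w)) /\
  forall B, F B -> (\int[P]_(w in B) (X w - Y w)%:E = 0)%E.
Proof.
case=> X_int Y_int _ XY; split.
  have := integrableB measurableT X_int Y_int.
  by congr (P.-integrable _ _); apply/funext => w /=; rewrite EFinB.
move=> B FB; have mB := sub_sigma_measurable FB.
have Y_intB := integrableS measurableT mB (@subsetT _ _) Y_int.
under eq_integral do rewrite EFinB.
rewrite integralB_EFin // ?XY ?subee //; first exact: integrable_fin_num Y_intB.
exact: integrableS measurableT mB (@subsetT _ _) X_int.
Qed.

Section bias_variance.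
Variables (J : finType) (X Y : J -> Omega -> R) (s2 : R).
Hypothesis XY_cexp : forall p, cexp_eq P F (X p) (Y p).
Hypothesis variance_le : cexp_le P F (fun w => \sum_p (X p w - Y p w) ^+ 2) (fun=> s2).
Hypothesis s2_ge0 : 0 <= s2.

Lemma measurable_cexp_eq p : measurable_fun setT (X p) /\ measurable_fun setT (Y p).
Proof.
case: (XY_cexp p) => X_int _ /Fmeas_measurable_fun Y_meas _; split => //.
exact/measurable_EFinP/(measurable_int _ X_int).
Qed.

Lemma integral_indic_variance_le (A : set Omega) : F A ->
  P.-integrable setT (EFin \o (fun w => \1_A w * \sum_p (X p w - Y p w) ^+ 2)) /\
  (\int[P]_w (\1_A w * \sum_p (X p w - Y p w) ^+ 2)%:E <= s2%:E)%E.
Proof.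
move=> FA; have mA := sub_sigma_measurable FA.
have integral_le : (\int[P]_w (\1_A w * \sum_p (X p w - Y p w) ^+ 2)%:E <= s2%:E)%E.
  rewrite -integral_setE_indic; apply: le_trans (variance_le.2 _ FA) _.
  rewrite integral_cst // -[X in (_ <= X)%E]mule1 lee_wpmul2l ?lee_fin //.
  exact: probability_le1.
split=> //; apply/integrableP; split.
  apply/measurable_EFinP/measurable_funM; first exact: measurable_indic.
  apply: measurable_sum => p; have [] := measurable_cexp_eq p.
  by move=> mX mY; apply/measurable_funX/measurable_funB.
rewrite (eq_integral (fun w => (\1_A w * \sum_p (X p w - Y p w) ^+ 2)%:E)).
  exact: le_lt_trans integral_le (ltry _).
by move=> w _ /=; rewrite ger0_norm // mulr_ge0 ?indicE // sumr_ge0 // => p _; exact: sqr_ge0.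
Qed.

Lemma integral_indic_cross_eq0 (A : set Omega) (M : R) p :
  F A -> (forall w, A w -> `|Y p w| <= M) ->
  P.-integrable setT (fun w => (2 * ((\1_A w * Y p w) * (X p w - Y p w)))%:E) /\
  (\int[P]_w (2 * ((\1_A w * Y p w) * (X p w - Y p w)))%:E = 0)%E.
Proof.
move=> FA YM; have [D_int D0] := cexp_eq_centered (XY_cexp p).
have [_ Y_meas] := measurable_cexp_eq p.
have AY_meas : measurable_fun setT (fun w => \1_A w * Y p w).
  by apply: measurable_funM => //; exact/measurable_indic/sub_sigma_measurable.
have AYD_int := integrable_bounded_mul AY_meas (normr_indicM_le YM) D_int.
have -> : (fun w => (2 * ((\1_A w * Y p w) * (X p w - Y p w)))%:E) =
          (fun w => 2%:E * (\1_A w * Y p w * (X p w - Y p w))%:E)%E.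
  by apply/funext => w; rewrite EFinM.
split; first exact: integrableZl.
rewrite integralZl //; under eq_integral do rewrite -mulrA.
rewrite -integral_setE_indic (integral_Fmeas_mul_eq0 _ D_int D0 FA YM) ?mule0 //.
by case: (XY_cexp p).
Qed.

Lemma integral_sum_sqr_le_on (A : set Omega) (M : R) :
  F A -> (forall p w, A w -> `|Y p w| <= M) ->
  (\int[P]_(w in A) (\sum_p X p w ^+ 2)%:E <= Ex P (fun w => (\sum_p Y p w ^+ 2)%R) + s2%:E)%E.
Proof.
move=> FA YM; have mA := sub_sigma_measurable FA.
have [D_int D_le] := integral_indic_variance_le FA.
have cross p := integral_indic_cross_eq0 FA (YM p).
have Y2_meas : measurable_fun setT (fun w => \sum_p Y p w ^+ 2).
  by apply: measurable_sum => p; apply: measurable_funX; exact: (measurable_cexp_eq p).2.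
have AY_int : P.-integrable setT (EFin \o (fun w => \1_A w * \sum_p Y p w ^+ 2)).
  apply: (@integrable_bounded _ _ _ P _ (\sum_(p : J) `|M| ^+ 2)).
    by apply: measurable_funM => //; exact: measurable_indic.
  move=> w; rewrite mulr_sumr (le_trans (ler_norm_sum _ _ _)) // ler_sum // => p _.
  have -> : \1_A w * Y p w ^+ 2 = (\1_A w * Y p w) ^+ 2.
    by rewrite indicE; case: (_ \in _); rewrite ?mul1r ?mul0r ?expr0n.
  by rewrite normrX ler_sqr ?nnegrE //; exact: normr_indicM_le (YM p) w.
have expand w : ((\1_A w * \sum_p X p w ^+ 2)%:E = (\1_A w * \sum_p Y p w ^+ 2)%:E
    + (\1_A w * \sum_p (X p w - Y p w) ^+ 2)%:E
    + \sum_p (2 * ((\1_A w * Y p w) * (X p w - Y p w)))%:E)%E.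
  rewrite sumEFin -!EFinD; congr EFin.
  by rewrite !mulr_sumr -!big_split /=; apply: eq_bigr => p _; ring.
rewrite integral_setE_indic; under eq_integral do rewrite expand.
rewrite integralD //; last 2 first.
- exact: integrableD.
- by apply: (integrable_sum measurableT) => p _; exact: (cross p).1.
rewrite integralD // integral_sum //; last by move=> p; exact: (cross p).1.
rewrite big1 ?adde0; last by move=> p _; exact: (cross p).2.
apply: leeD => //; rewrite -integral_setE_indic; apply: ge0_subset_integral => //.
- exact/measurable_EFinP.
- by move=> w _; rewrite lee_fin sumr_ge0 // => p _; rewrite sqr_ge0.
Qed.

Lemma Ex_sum_sqr_le :
  (Ex P (fun w => (\sum_p X p w ^+ 2)%R) <= Ex P (fun w => (\sum_p Y p w ^+ 2)%R) + s2%:E)%E.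
Proof.
pose A (n : nat) := \bigcap_p (Y p @^-1` `[- n%:R, n%:R]).
have FA n : F (A n).
  apply: (@fin_bigcap_measurable _ (g_sigma_algebraType G0)) finite_finset _ => p _.
  by case: (XY_cexp p) => _ _ FY _; apply: FY; exact: measurable_itv.
have YA n p w : A n w -> `|Y p w| <= n%:R.
  by move=> /(_ p I); rewrite /= in_itv /= ler_norml.
apply: (ge0_integral_le_nd_cover (A := A)) => //.
- by move=> n; exact: sub_sigma_measurable.
- move=> n m nm; apply/subsetPset => w Anw p _.
  move: (Anw p I); rewrite /= !in_itv /= => /andP[? ?].
  have : (n%:R : R) <= m%:R by rewrite ler_nat.
  by move=> ?; apply/andP; split; lra.
- apply/seteqP; split=> // w _; exists (Num.truncn (\sum_p `|Y p w|)).+1 => // p _.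
  rewrite /= in_itv /= -ler_norml; apply: le_trans (ltW (truncnS_gt _)).
  by rewrite (bigD1 p) //= lerDl sumr_ge0.
- by apply: measurable_sum => p; apply: measurable_funX; exact: (measurable_cexp_eq p).1.
- by move=> w; rewrite sumr_ge0 // => p _; rewrite sqr_ge0.
- by move=> n; exact: integral_sum_sqr_le_on (FA n) (YA n).
Qed.

End bias_variance.

Lemma Ex_bnorm2_le K (d : 'I_K.+1 -> nat) (X Y : Omega -> forall k, 'rV[R]_(d k)) (s2 : R) :
  (forall k l, cexp_eq P F (fun w => X w k 0 l) (fun w => Y w k 0 l)) ->
  cexp_le P F (fun w => bnorm2 (fun k => X w k - Y w k)) (fun=> s2) -> 0 <= s2 ->
  (Ex P (fun w => bnorm2 (X w)) <= Ex P (fun w => bnorm2 (Y w)) + s2%:E)%E.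
Proof.
move=> XY variance_le s2_ge0.
pose X' (p : {k : 'I_K.+1 & 'I_(d k)}) w := X w (tag p) 0 (tagged p).
pose Y' (p : {k : 'I_K.+1 & 'I_(d k)}) w := Y w (tag p) 0 (tagged p).
have bnorm2E (Z : Omega -> forall k, 'rV[R]_(d k)) :
    (fun w => bnorm2 (Z w)) =
    (fun w => \sum_(p : {k : 'I_K.+1 & 'I_(d k)}) Z w (tag p) 0 (tagged p) ^+ 2).
  by apply/funext => w; exact: bnorm2_sig.
rewrite !bnorm2E; apply: (Ex_sum_sqr_le (X := X') (Y := Y')) => // [p|].
  exact: XY.
move: variance_le; congr cexp_le; rewrite bnorm2E; apply/funext => w.
by apply: eq_bigr => p _; rewrite !mxE.
Qed.

End conditioning.

Section ef_vfl.
Context {R : realType} {K N : nat} {d E : 'I_K.+1 -> nat}.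
Variables (Hf : forall k, 'rV[R]_(d k) -> 'M[R]_(N, E k)) (L : R).
Arguments Hf : clear implicits.
Hypothesis Hf_diff : forall k x, differentiable (Hf k) x.
Hypothesis Hf_jac : forall k x, jac_norm (Hf k) x <= L.

Lemma Dgap_ge0 (x : forall k, 'rV[R]_(d k)) (G : forall k, 'M[R]_(N, E k)) : 0 <= Dgap Hf x G.
Proof. by apply: sumr_ge0 => k _; exact: fro2_ge0. Qed.

Lemma gap_step_le (alpha eta eps : R) (x g : forall k, 'rV[R]_(d k))
    (G : forall k, 'M[R]_(N, E k)) :
  alpha <= 1 -> 0 < eps ->
  (1 - alpha) * \sum_k fro2 (Hf k (x k - eta *: g k) - G k) <=
  (1 - alpha) * (1 + eps) * Dgap Hf x G + (1 - alpha) * (1 + eps^-1) * eta ^+ 2 * L ^+ 2 * bnorm2 g.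
Proof.
move=> alpha_le1 eps_gt0.
have -> : (1 - alpha) * (1 + eps) * Dgap Hf x G
    + (1 - alpha) * (1 + eps^-1) * eta ^+ 2 * L ^+ 2 * bnorm2 g
  = (1 - alpha) * ((1 + eps) * Dgap Hf x G + (1 + eps^-1) * (eta ^+ 2 * L ^+ 2 * bnorm2 g)).
  by ring.
rewrite ler_wpM2l ?subr_ge0 // /Dgap /bnorm2 !mulr_sumr -big_split /=.
by apply: ler_sum => k _; exact: fro2_step_le.
Qed.

Context {dO : measure_display} {Omega : measurableType dO} (P : probability Omega R).

Lemma measurable_fro2_gap (y : Omega -> forall k, 'rV[R]_(d k))
    (G : Omega -> forall k, 'M[R]_(N, E k)) k :
  (forall l, measurable_fun setT (fun w => y w k 0 l)) ->
  (forall i j, measurable_fun setT (fun w => G w k i j)) ->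
  measurable_fun setT (fun w => fro2 (Hf k (y w k) - G w k)).
Proof.
move=> y_meas G_meas; apply: measurable_fro2 => i j; apply: measurable_entryB => //.
by apply: measurable_entry_comp => // v; exact: differentiable_continuous.
Qed.

Lemma Ex_Dgap_compressed_le (alpha : R) (x : Omega -> forall k, 'rV[R]_(d k))
    (G G' : Omega -> forall k, 'M[R]_(N, E k))
    (C : forall k, Omega -> 'M[R]_(N, E k) -> 'M[R]_(N, E k)) :
  (forall k l, measurable_fun setT (fun w => x w k 0 l)) ->
  (forall k i j, measurable_fun setT (fun w => G w k i j)) ->
  (forall k i j, measurable_fun setT (fun w => G' w k i j)) ->
  (forall w k, G' w k = G w k + C k w (Hf k (x w k) - G w k)) ->
  (forall k, Ex P (fun w => fro2 (C k w (Hf k (x w k) - G w k) - (Hf k (x w k) - G w k)))%R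
             <= Ex P (fun w => (1 - alpha) * fro2 (Hf k (x w k) - G w k))%R)%E ->
  alpha <= 1 ->
  (Ex P (fun w => Dgap Hf (x w) (G' w))
   <= Ex P (fun w => (1 - alpha) * \sum_k fro2 (Hf k (x w k) - G w k))%R)%E.
Proof.
move=> x_meas G_meas G'_meas G'E C_contr alpha_le1.
have one_alpha_ge0 : 0 <= 1 - alpha by rewrite subr_ge0.
have -> : (fun w => (1 - alpha) * \sum_k fro2 (Hf k (x w k) - G w k)) =
          (fun w => \sum_k (1 - alpha) * fro2 (Hf k (x w k) - G w k)).
  by apply/funext => w; rewrite mulr_sumr.
rewrite /Dgap !Ex_sum; last 4 first.
- by move=> k; apply: measurable_funM => //; exact: measurable_fro2_gap.
- by move=> k w; rewrite mulr_ge0 ?fro2_ge0.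
- by move=> k; under eq_fun do rewrite fro2_subC; exact: measurable_fro2_gap.
- by move=> k w; exact: fro2_ge0.
apply: lee_sum => k _.
have gapE w : fro2 (G' w k - Hf k (x w k)) =
              fro2 (C k w (Hf k (x w k) - G w k) - (Hf k (x w k) - G w k)).
  by rewrite G'E opprB addrCA addrA.
under eq_fun do rewrite gapE.
exact: C_contr.
Qed.

Lemma Ex_gap_step_le (alpha eta eps : R) (x x' g : Omega -> forall k, 'rV[R]_(d k))
    (G : Omega -> forall k, 'M[R]_(N, E k)) (V : \bar R) :
  (forall k l, measurable_fun setT (fun w => x w k 0 l)) ->
  (forall k l, measurable_fun setT (fun w => x' w k 0 l)) ->
  (forall k l, measurable_fun setT (fun w => g w k 0 l)) ->
  (forall k i j, measurable_fun setT (fun w => G w k i j)) ->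
  (forall w k, x' w k = x w k - eta *: g w k) -> alpha <= 1 -> 0 < eps ->
  (Ex P (fun w => bnorm2 (g w)) <= V)%E ->
  (Ex P (fun w => (1 - alpha) * \sum_k fro2 (Hf k (x' w k) - G w k))%R
   <= ((1 - alpha) * (1 + eps))%:E * Ex P (fun w => Dgap Hf (x w) (G w))
      + ((1 - alpha) * (1 + eps^-1) * eta ^+ 2 * L ^+ 2)%:E * V)%E.
Proof.
move=> x_meas x'_meas g_meas G_meas x'E alpha_le1 eps_gt0 g_le.
have one_alpha_ge0 : 0 <= 1 - alpha by rewrite subr_ge0.
have eps_inv_ge0 : 0 <= 1 + eps^-1 by rewrite addr_ge0 // invr_ge0 ltW.
have c_ge0 : 0 <= (1 - alpha) * (1 + eps^-1) * eta ^+ 2 * L ^+ 2.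
  by apply/mulr_ge0/sqr_ge0; apply/mulr_ge0/sqr_ge0; exact/mulr_ge0.
apply: le_trans (leeD2l _ (lee_wpmul2l _ g_le)); last by rewrite lee_fin.
have Dgap_meas : measurable_fun setT (fun w => Dgap Hf (x w) (G w)).
  apply: measurable_sum => k; under eq_fun do rewrite fro2_subC.
  exact: measurable_fro2_gap.
have g_norm_meas : measurable_fun setT (fun w => bnorm2 (g w)).
  by apply: measurable_sum => k; apply: measurable_fro2 => i j; rewrite (ord1 i).
rewrite -Ex_add_scale //; last 3 first.
- by rewrite mulr_ge0 // addr_ge0 // ltW.
- by move=> w; exact: Dgap_ge0.
- by move=> w; apply: sumr_ge0 => k _; exact: fro2_ge0.
apply: le_Ex => [||w|w].
- by apply: measurable_funM => //; apply: measurable_sum => k; exact: measurable_fro2_gap.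
- by apply: measurable_funD; apply: measurable_funM.
- by rewrite mulr_ge0 // sumr_ge0 // => k _; exact: fro2_ge0.
- under eq_bigr do rewrite x'E; exact: gap_step_le.
Qed.

End ef_vfl.

Theorem lemma2
  (R : realType) (K N : nat) (d E : 'I_K.+1 -> nat)
  (Hf : forall k : 'I_K.+1, 'rV[R]_(d k) -> 'M[R]_(N, E k))
  (Hb : R)
  (Phi : 'M[R]_(N, \sum_(k < K.+1) E k) -> R)
  (alpha eta sigma : R) (B T : nat)
  (dO : measure_display) (Omega : measurableType dO) (P : probability Omega R)
  (x : nat -> Omega -> forall k : 'I_K.+1, 'rV[R]_(d k))
  (G : nat -> Omega -> forall k : 'I_K.+1, 'M[R]_(N, E k))
  (gt : nat -> Omega -> forall k : 'I_K.+1, 'rV[R]_(d k))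
  (Cr : nat -> forall k : 'I_K.+1, Omega -> 'M[R]_(N, E k) -> 'M[R]_(N, E k)) :
  (1 <= K)%N -> (1 <= N)%N ->
  (* the maps H_k: differentiable with bounded derivative *)
  (forall k x0, differentiable (Hf k) x0) ->
  (forall k x0, jac_norm (Hf k) x0 <= Hb) ->
  (* Phi differentiable *)
  (forall Z, differentiable Phi Z) ->
  0 < alpha <= 1 -> 0 < eta -> (0 < B)%N -> 0 <= sigma ->
  (* the iterates are random variables *)
  (forall t k l, measurable_fun setT (fun w => x t w k 0 l)) ->
  (forall t k i j, measurable_fun setT (fun w => G t w k i j)) ->
  (forall t k l, measurable_fun setT (fun w => gt t w k 0 l)) ->
  (* EF-VFL recursion; Cr t k is the t-th (random) application of the compressor
     to block k (Cr 0 for G^0, Cr (t+1) for G^(t+1)) *)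
  (forall w k, G 0 w k = Cr 0%N k w (Hf k (x 0%N w k))) ->
  (forall t w k, x t.+1 w k = x t w k - eta *: gt t w k) ->
  (forall t w k, G t.+1 w k = G t w k + Cr t.+1 k w (Hf k (x t.+1 w k) - G t w k)) ->
  (* contractive compressor with fresh randomness at each application:
     E[ ||C(v) - v||^2 | everything available when C is applied ] <= (1-alpha) ||v||^2 *)
  (forall k,
     cexp_le P (gen_by [set f | exists k' l, f = fun w => x 0%N w k' 0 l])
       (fun w => fro2 (Cr 0%N k w (Hf k (x 0%N w k)) - Hf k (x 0%N w k)))
       (fun w => (1 - alpha) * fro2 (Hf k (x 0%N w k)))) ->
  (forall t k,
     cexp_le P
       (gen_by [set f | (exists s k' i j, (s <= t)%N /\ f = fun w => G s w k' i j)
                     \/ (exists s k' l, (1 <= s <= t.+1)%N /\ f = fun w => x s w k' 0 l)])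
       (fun w => fro2 (Cr t.+1 k w (Hf k (x t.+1 w k) - G t w k)
                       - (Hf k (x t.+1 w k) - G t w k)))
       (fun w => (1 - alpha) * fro2 (Hf k (x t.+1 w k) - G t w k))) ->
  (* unbiasedness and bounded variance of the mini-batch gradient, w.r.t.
     F_t = sigma(G^0, x^1, G^1, ..., x^t, G^t) *)
  (forall t, (t < T)%N -> forall k l,
     cexp_eq P
       (gen_by [set f | (exists s k' i j, (s <= t)%N /\ f = fun w => G s w k' i j)
                     \/ (exists s k' l', (1 <= s <= t)%N /\ f = fun w => x s w k' 0 l')])
       (fun w => gt t w k 0 l)
       (fun w => surr_grad Hf Phi (x t w) (G t w) k 0 l)) ->
  (forall t, (t < T)%N ->
     cexp_le P
       (gen_by [set f | (exists s k' i j, (s <= t)%N /\ f = fun w => G s w k' i j)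
                     \/ (exists s k' l', (1 <= s <= t)%N /\ f = fun w => x s w k' 0 l')])
       (fun w => bnorm2 (fun k => gt t w k - surr_grad Hf Phi (x t w) (G t w) k))
       (fun _ => sigma ^+ 2 / B%:R)) ->
  forall t, (t < T)%N -> forall eps : R, 0 < eps ->
  (Ex P (fun w => Dgap Hf (x t.+1 w) (G t.+1 w))
   <= ((1 - alpha) * (1 + eps))%:E * Ex P (fun w => Dgap Hf (x t w) (G t w))
      + ((1 - alpha) * (1 + eps^-1) * eta ^+ 2 * Hb ^+ 2)%:E
        * (Ex P (fun w => bnorm2 (fun k => surr_grad Hf Phi (x t w) (G t w) k))
           + (sigma ^+ 2 / B%:R)%:E))%E.
Proof.
move=> _ _ Hf_diff Hf_jac _ /andP[_ alpha_le1] _ _ _ x_meas G_meas gt_meas _ x_succ G_succ _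
  C_contr g_unbiased g_variance t tT eps eps_gt0.
apply: le_trans (Ex_Dgap_compressed_le Hf_diff (x_meas t.+1) (G_meas t) (G_meas t.+1)
  (G_succ t) (fun k => cexp_le_Ex (C_contr t k)) alpha_le1) _.
apply: (Ex_gap_step_le Hf_diff Hf_jac (x_meas t) (x_meas t.+1) (gt_meas t) (G_meas t)
  (x_succ t) alpha_le1 eps_gt0).
apply: (Ex_bnorm2_le _ (g_unbiased t tT) (g_variance t tT)); last by rewrite divr_ge0 ?sqr_ge0.
apply: preimage_sets_measurable => f [[s [k [i [j [_ ->]]]]]|[s [k [l [_ ->]]]]].
- exact: G_meas.
- exact: x_meas.
Qed.
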